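(* Let $n\ge2$ and let $A[0],\dots,A[n-1]$ be integers with $0=A[0]<A[1]<\cdots<A[n-1]=M$, and assume $2A[i]\le A[2i]$ for all $i$ with $2i\le n-1$. Let $D=Mn+1$. Consider the $0/1$-Knapsack instance with capacity $2n-1$ and the following items (weight, value): for $i=1,\dots,n-1$, an item $(i,\,2A[i])$; for each $i\in\{0,\dots,n-1\}\setminus\{1\}$, an item $(2n-1-i,\,2(D-A[i]))$; and an item $(2n-2,\,2(D-A[1])+1)$. Then the optimal value of this instance is odd if and only if $A$ is super-additive, i.e. $A[i]+A[j]\le A[i+j]$ for all $i,j\ge0$ with $i+j\le n-1$.
   Context: $0/1$-Knapsack: given items $(w_i,v_i)$ and capacity $t$, the optimal value is $\max\sum_{i\in I}v_i$ over subsets $I$ of items with $\sum_{i\in I}w_i\le t$ (each item used at most once). *)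

From mathcomp Require Import all_boot.
Set Implicit Arguments. Unset Strict Implicit. Unset Printing Implicit Defensive.

Definition knapsack_opt (items : seq (nat * nat)) (t : nat) : nat :=
  \max_(S : {set 'I_(size items)} |
          \sum_(i in S) (nth (0,0) items i).1 <= t)
     \sum_(i in S) (nth (0,0) items i).2.

Definition reduction_items (n : nat) (A : nat -> nat) : seq (nat * nat) :=
  let M := A n.-1 in
  let D := M * n + 1 in
  [seq (i, 2 * A i) | i <- iota 1 n.-1]
  ++ [seq (2 * n - 1 - i, 2 * (D - A i)) | i <- iota 0 n & i != 1]
  ++ [:: (2 * n - 2, 2 * (D - A 1) + 1)].

Definition super_additive (n : nat) (A : nat -> nat) : Prop :=
  forall i j, i + j <= n - 1 -> A i + A j <= A (i + j).

From mathcomp Require Import all_boot zify.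

Set Implicit Arguments.
Unset Strict Implicit.
Unset Printing Implicit Defensive.

(* Call an item heavy if its weight is at least n, i.e. all items but the n - 1
   items (i, 2 A[i]); a feasible set holds at most one heavy item. The light
   item (1, 2 A[1]) with the odd item (2n - 2, 2(D - A[1]) + 1) is worth 2D + 1.
   Beside the odd item only light weight 1 fits, so such sets are worth at most
   2D + 1; every other heavy item has even value. Beside the heavy item
   (2n - 1 - i, 2(D - A[i])) the light items have total weight s <= i, so under
   super-additivity they are worth at most 2 A[s] <= 2 A[i], and the set at most
   2D; with no heavy item a set is worth at most 2(n - 1)M < 2D. Hence an odd
   optimum, or a super-additive A, forces the optimum to be 2D + 1. Conversely a
   violation A[i] + A[j] > A[i + j] has 0 < i <> j by the doubling hypothesis,
   and the items of weights i, j, 2n - 1 - (i + j) are worth at least 2D + 2. *)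

Lemma sum_superadditive (B : nat -> nat) m (I : Type) (r : seq I) (P : pred I)
    (w : I -> nat) :
  B 0 = 0 -> (forall i j, i + j <= m -> B i + B j <= B (i + j)) ->
  \sum_(i <- r | P i) w i <= m ->
  \sum_(i <- r | P i) B (w i) <= B (\sum_(i <- r | P i) w i).
Proof.
move=> B0 B_sa; elim: r => [|a r IH]; rewrite ?big_nil ?big_cons ?B0 //.
case: (P a) => // le_m.
apply: leq_trans (B_sa _ _ le_m); rewrite leq_add2l; apply: IH.
exact: leq_trans (leq_addl _ _) le_m.
Qed.

Lemma card_ord_lt N m (S : {set 'I_N}) : {in S, forall i : 'I_N, i < m} -> #|S| <= m.
Proof.
move=> S_lt; rewrite cardE -(size_map val) -(size_iota 0 m).
apply: uniq_leq_size; first by rewrite (map_inj_uniq val_inj) enum_uniq.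
by move=> _ /mapP[i iS ->]; rewrite mem_iota /= S_lt // -mem_enum.
Qed.

Lemma filter_iota_neq1 m : [seq i <- iota 0 m.+2 | i != 1] = 0 :: iota 2 m.
Proof.
by rewrite /=; congr (_ :: _); apply/all_filterP/allP => x; rewrite mem_iota; lia.
Qed.

Section Reduction.

Variables (n : nat) (A : nat -> nat).
Hypotheses (n_ge2 : 2 <= n) (A0 : A 0 = 0).
Hypothesis A_incr : forall i, i.+1 <= n - 1 -> A i < A i.+1.

Local Notation M := (A n.-1).
Local Notation D := (A n.-1 * n + 1).
Local Notation items := (reduction_items n A).

Lemma A_mono i j : i <= j -> j <= n - 1 -> A i <= A j.
Proof.
elim: j => [|j IH]; first by rewrite leqn0 => /eqP->.
rewrite leq_eqVlt => /predU1P[-> //|/IH le_ij] lt_j.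
exact: leq_trans (le_ij (ltnW lt_j)) (ltnW (A_incr lt_j)).
Qed.

Lemma A_le_M i : i <= n - 1 -> A i <= M.
Proof. by move=> le_i; apply: A_mono; rewrite // -subn1. Qed.

Lemma A_le_D i : i <= n - 1 -> A i <= D.
Proof. by move=> /A_le_M le_M; apply: leq_trans le_M _; nia. Qed.

(* The items of [reduction_items] in order: the n - 1 light items of weight
   k + 1 at positions k < n - 1, then the heavy items of weight 2n - 1 - i for
   i = 0, 2, ..., n - 1, where position k >= n - 1 carries i = [big_index k],
   and last the heavy item of odd value at position 2n - 2. *)
Definition big_index k := if k == n.-1 then 0 else k.+2 - n.

Definition item k :=
  if k < n.-1 then (k.+1, 2 * A k.+1)
  else if k < 2 * n - 2 then (2 * n - 1 - big_index k, 2 * (D - A (big_index k)))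
  else (2 * n - 2, 2 * (D - A 1) + 1).

Lemma size_reduction_items : size items = 2 * n - 1.
Proof.
case: n n_ge2 => [|[|m]] // _.
by rewrite /reduction_items filter_iota_neq1 !size_cat /= !size_map !size_iota; lia.
Qed.

Lemma ltn_size_items k : k < 2 * n - 1 -> k < size items.
Proof. by rewrite size_reduction_items. Qed.

Lemma nth_reduction_items k : k < 2 * n - 1 -> nth (0, 0) items k = item k.
Proof.
rewrite /item /big_index; case: n n_ge2 => [|[|m]] // _ lt_k.
rewrite /reduction_items filter_iota_neq1 nth_cat size_map size_iota.
case: ifP => [lt_k1|ge_k1]; first by rewrite (nth_map 0) ?size_iota // nth_iota.
rewrite nth_cat /= size_map size_iota.
case: ifP => [lt_k2|ge_k2]; last first.
  have -> : k - m.+1 - m.+1 = 0 by lia.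
  by rewrite ifF //; lia.
rewrite ifT; last lia.
case kE: (k - m.+1) => [|j] /=; first by rewrite ifT //; lia.
rewrite ifF; last lia.
rewrite (nth_map 0) ?size_iota ?nth_iota; try lia.
by congr (_, 2 * (_ - A _)); lia.
Qed.

Lemma item_light k : k < n.-1 -> item k = (k.+1, 2 * A k.+1).
Proof. by rewrite /item => ->. Qed.

Lemma item_heavy k : n.-1 <= k < 2 * n - 2 ->
  item k = (2 * n - 1 - big_index k, 2 * (D - A (big_index k))).
Proof. by case/andP=> ge_k lt_k; rewrite /item ltnNge ge_k lt_k. Qed.

Lemma item_odd : item (2 * n - 2) = (2 * n - 2, 2 * (D - A 1) + 1).
Proof. by rewrite /item !ifF //; lia. Qed.

Lemma big_index_le k : k < 2 * n - 2 -> big_index k <= n - 1.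
Proof. by rewrite /big_index; case: ifP => _; lia. Qed.

Lemma heavy_item_weight k : n.-1 <= k < 2 * n - 1 -> n <= (item k).1.
Proof.
case/andP=> ge_k lt_k; case: (ltngtP k (2 * n - 2)) => [lt_k2|gt_k2|->].
- by rewrite item_heavy ?ge_k //=; have := big_index_le lt_k2; lia.
- lia.
- by rewrite item_odd /=; lia.
Qed.

Definition weight (S : {set 'I_(size items)}) := \sum_(k in S) (item k).1.
Definition value (S : {set 'I_(size items)}) := \sum_(k in S) (item k).2.

Lemma knapsack_opt_reductionE t :
  knapsack_opt items t = \max_(S | weight S <= t) value S.
Proof.
have itemE (k : 'I_(size items)) : nth (0, 0) items k = item k.
  by apply: nth_reduction_items; rewrite -size_reduction_items.
by apply: eq_big => [S|S _]; [congr (_ <= _)|]; apply: eq_bigr => k _; rewrite itemE.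
Qed.

Lemma light_setD1_heavy S b : weight S <= 2 * n - 1 -> b \in S -> n.-1 <= b ->
  {in S :\ b, forall k : 'I_(size items), k < n.-1}.
Proof.
move=> wS bS ge_b k /setD1P[kb kS]; rewrite ltnNge; apply/negP => ge_k.
have lt_size (l : 'I_(size items)) : l < 2 * n - 1.
  by rewrite -size_reduction_items.
have := heavy_item_weight (introT andP (conj ge_b (lt_size b))).
have := heavy_item_weight (introT andP (conj ge_k (lt_size k))).
by move: wS; rewrite /weight (big_setD1 b bS) (big_setD1 k) ?inE ?kb //=; lia.
Qed.

Section LightSets.

Variable T : {set 'I_(size items)}.
Hypothesis T_light : {in T, forall k : 'I_(size items), k < n.-1}.

Lemma weight_light : weight T = \sum_(k in T) k.+1.
Proof. by apply: eq_bigr => k /T_light lt_k; rewrite item_light. Qed.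

Lemma value_light : value T = 2 * \sum_(k in T) A k.+1.
Proof.
by rewrite big_distrr; apply: eq_bigr => k /T_light lt_k; rewrite item_light.
Qed.

Lemma value_light_le : value T <= 2 * D.
Proof.
rewrite value_light.
have sum_le : \sum_(k in T) A k.+1 <= #|T| * M.
  rewrite -sum_nat_const; apply: leq_sum => k /T_light lt_k; apply: A_le_M; lia.
by have := card_ord_lt T_light; nia.
Qed.

Lemma value_light_le_superadditive m :
  (forall i j, i + j <= m -> A i + A j <= A (i + j)) ->
  weight T <= m -> m <= n - 1 -> value T <= 2 * A m.
Proof.
move=> A_sa; rewrite value_light weight_light leq_mul2l /= => wT le_m.
apply: leq_trans (sum_superadditive A0 A_sa wT) _.
exact: A_mono wT le_m.
Qed.

End LightSets.

Lemma value_le_odd_or_superadditive S : weight S <= 2 * n - 1 ->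
  odd (value S) \/ super_additive n A -> value S <= 2 * D + 1.
Proof.
move=> wS odd_or_sa.
have [b /andP[bS ge_b]|no_heavy] := pickP [pred k in S | n.-1 <= k]; last first.
  apply: leq_trans (value_light_le _) (leq_addr _ _) => k kS.
  by move: (no_heavy k); rewrite /= kS ltnNge => /negbT.
have T_light := light_setD1_heavy wS bS ge_b.
have lt_b : nat_of_ord b < 2 * n - 1 by rewrite -size_reduction_items.
move: wS odd_or_sa; rewrite /weight /value !(big_setD1 b bS) /= -/(weight _) -/(value _).
case: (ltngtP b (2 * n - 2)) => [lt_b2||b_odd]; last 2 first.
- lia.
- have A_sa1 i j : i + j <= 1 -> A i + A j <= A (i + j).
    case: i => [|i] le1; first by rewrite A0 add0n.
    have -> : j = 0 by lia.
    by rewrite A0 !addn0.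
  rewrite b_odd item_odd /= => wT _.
  have A1_le_D : A 1 <= D by apply: A_le_D; lia.
  by have := value_light_le_superadditive T_light A_sa1 (m := 1); lia.
rewrite item_heavy ?ge_b //=; have le_i := big_index_le lt_b2.
move=> wT [|A_sa]; first by rewrite value_light // oddD !oddM.
have A_sai i j : i + j <= big_index b -> A i + A j <= A (i + j).
  by move=> le_ij; apply: A_sa; apply: leq_trans le_i.
have := value_light_le_superadditive T_light A_sai (m := big_index b).
have := A_le_D le_i.
lia.
Qed.

Lemma feasible_value_2D1 : exists2 S, weight S <= 2 * n - 1 & value S = 2 * D + 1.
Proof.
have [lt_a lt_c] : 0 < 2 * n - 1 /\ 2 * n - 2 < 2 * n - 1 by lia.
pose a := Ordinal (ltn_size_items lt_a); pose c := Ordinal (ltn_size_items lt_c).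
have a_c : a \notin [set c] by rewrite inE; apply/eqP => /(congr1 val) /=; lia.
have item_a : item a = (1, 2 * A 1) by rewrite item_light //=; lia.
have A1_le_D : A 1 <= D by apply: A_le_D; lia.
by exists [set a; c]; rewrite /weight /value big_setU1 // big_set1 item_a item_odd /=; lia.
Qed.

Lemma feasible_value_of_violation i j : i != j -> i.+1 + j.+1 <= n - 1 ->
  exists2 S, weight S <= 2 * n - 1 &
    value S + 2 * A (i.+1 + j.+1) = 2 * D + 2 * A i.+1 + 2 * A j.+1.
Proof.
move=> ij le_ij.
have [lt_i lt_j lt_k] : [/\ i < 2 * n - 1, j < 2 * n - 1 & n + i + j < 2 * n - 1].
  by split; lia.
pose oi := Ordinal (ltn_size_items lt_i); pose oj := Ordinal (ltn_size_items lt_j).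
pose ok := Ordinal (ltn_size_items lt_k).
have oi_jk : oi \notin [set oj; ok].
  by rewrite !inE; apply/norP; split; apply/eqP => /(congr1 val) /=; lia.
have oj_k : oj \notin [set ok] by rewrite inE; apply/eqP => /(congr1 val) /=; lia.
have big_k : big_index ok = i.+1 + j.+1 by rewrite /big_index /= ifF; lia.
have item_k : item ok = (2 * n - 1 - (i.+1 + j.+1), 2 * (D - A (i.+1 + j.+1))).
  by rewrite item_heavy -?big_k //=; lia.
have Aij_le_D := A_le_D le_ij.
exists (oi |: [set oj; ok]);
  rewrite /weight /value !big_setU1 // big_set1 item_k !item_light /=; lia.
Qed.

Lemma knapsack_opt_reduction_ge : 2 * D + 1 <= knapsack_opt items (2 * n - 1).
Proof.
have [S wS <-] := feasible_value_2D1.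
by rewrite knapsack_opt_reductionE; apply: leq_bigmax_cond.
Qed.

Lemma knapsack_opt_reduction_le :
  odd (knapsack_opt items (2 * n - 1)) \/ super_additive n A ->
  knapsack_opt items (2 * n - 1) <= 2 * D + 1.
Proof.
rewrite knapsack_opt_reductionE => -[odd_opt|A_sa].
  have feasible0 : 0 < #|[pred S | weight S <= 2 * n - 1]|.
    by apply/card_gt0P; exists set0; rewrite inE /weight big_set0.
  have [S wS optE] := eq_bigmax_cond value feasible0.
  by rewrite optE in odd_opt *; apply: value_le_odd_or_superadditive wS _; left.
by apply/bigmax_leqP => S wS; apply: value_le_odd_or_superadditive wS _; right.
Qed.

Lemma superadditive_of_knapsack_opt_le :
  (forall i, 2 * i <= n - 1 -> 2 * A i <= A (2 * i)) ->
  knapsack_opt items (2 * n - 1) <= 2 * D + 1 -> super_additive n A.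
Proof.
move=> A_dbl opt_le [|i] [|j] le_ij; rewrite ?A0 ?addn0 // leqNgt; apply/negP => lt_ij.
have [ij|ij] := eqVneq i j.
  by move: (A_dbl i.+1) lt_ij; rewrite ij addnn -mul2n; lia.
have [S wS valueS] := feasible_value_of_violation ij le_ij.
rewrite knapsack_opt_reductionE in opt_le.
by have := leq_trans (@leq_bigmax_cond _ _ value S wS) opt_le; lia.
Qed.

End Reduction.

Theorem mainTheorem16 (n : nat) (A : nat -> nat) :
  2 <= n ->
  A 0 = 0 ->
  (forall i, i.+1 <= n - 1 -> A i < A i.+1) ->
  (forall i, 2 * i <= n - 1 -> 2 * A i <= A (2 * i)) ->
  odd (knapsack_opt (reduction_items n A) (2 * n - 1)) <-> super_additive n A.
Proof.
move=> n_ge2 A0 A_incr A_dbl.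
have opt_le := knapsack_opt_reduction_le n_ge2 A0 A_incr.
split=> [odd_opt|A_sa].
  by apply: (superadditive_of_knapsack_opt_le n_ge2 A0 A_incr A_dbl); apply: opt_le; left.
have opt_eq : knapsack_opt (reduction_items n A) (2 * n - 1) = 2 * (A n.-1 * n + 1) + 1.
  by apply/eqP; rewrite eqn_leq opt_le ?knapsack_opt_reduction_ge //; right.
by rewrite opt_eq oddD oddM.
Qed.
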